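(* Let $n>2$ be an integer, $a,c\in\mathbb{R}$ and $b\in\mathbb{R}$ with $b\neq0$. Let $M=m_n(a,b,c)$ be the $(n+1)\times(n+1)$ real symmetric matrix with rows and columns indexed $0,1,\dots,n$, whose $(0,0)$-entry is $-nc$, whose $(0,j)$- and $(j,0)$-entries equal $b$ for $j=1,\dots,n$, and whose lower-right $n\times n$ block (indices $1,\dots,n$) is the circulant matrix $\mathrm{circ}(c,a,0,\dots,0,a)$, i.e. its $(j,j)$-entry is $c$, its $(j,j')$-entry is $a$ when $j'\equiv j\pm1 \pmod n$, and all other entries are $0$. Put $\varphi=2\pi/n$, $\omega=e^{\mathrm{i}\varphi}$, \[\Delta=\bigl(2a+(n+1)c\bigr)^2+4nb^2,\qquad \beta_\pm=-\frac{2a+(n+1)c\mp\sqrt{\Delta}}{2b},\] \[\lambda_\pm=b\beta_\pm+2a+c=\tfrac12\bigl(2a-(n-1)c\pm\sqrt\Delta\bigr),\qquad \lambda_k=c+2a\cos(k\varphi)\ (k=1,\dots,n-1).\] Let $\bm w_\pm=[\beta_\pm,1,1,\dots,1]^{\mathsf T}\in\mathbb{R}^{n+1}$ and $\bm w_k=[0,1,\omega^k,\omega^{2k},\dots,\omega^{(n-1)k}]^{\mathsf T}\in\mathbb{C}^{n+1}$ for $k=1,\dots,n-1$. Then $(\lambda_-,\bm w_-)$, $(\lambda_+,\bm w_+)$ and $(\lambda_k,\bm w_k)$, $k=1,\dots,n-1$, are the eigenpairs of $M$: $M\bm w_\pm=\lambda_\pm\bm w_\pm$, $M\bm w_k=\lambda_k\bm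 w_k$, and the $n+1$ vectors $\bm w_-,\bm w_+,\bm w_1,\dots,\bm w_{n-1}$ are linearly independent. *)

From mathcomp Require Import all_boot all_order all_algebra.
From mathcomp Require Import all_classical all_reals.
From mathcomp Require Import trigo.
From mathcomp.real_closed Require Import complex.
Set Implicit Arguments. Unset Strict Implicit. Unset Printing Implicit Defensive.
Import GRing.Theory Num.Theory.
Local Open Scope ring_scope.
Local Open Scope complex_scope.

Section Defs.
Variable R : realType.
Variable n : nat.
Variables a b c : R.

Definition mn : 'M[R]_(n.+1) :=
  \matrix_(i, j)
    if (i == 0 :> nat) && (j == 0 :> nat) then - (n%:R * c)
    else if (i == 0 :> nat) || (j == 0 :> nat) then b
    else if i == j :> nat then c
    else if ((i.+1 %% n)%N == (j %% n)%N) || ((j.+1 %% n)%N == (i %% n)%N)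
         then a else 0.

Definition phi : R := 2 * pi / n%:R.

Definition omega : R[i] := cos phi +i* sin phi.

Definition Delta : R := (2 * a + n.+1%:R * c) ^+ 2 + 4 * n%:R * b ^+ 2.

Definition beta_plus : R := - (2 * a + n.+1%:R * c - Num.sqrt Delta) / (2 * b).
Definition beta_minus : R := - (2 * a + n.+1%:R * c + Num.sqrt Delta) / (2 * b).

Definition lambda_plus : R := b * beta_plus + 2 * a + c.
Definition lambda_minus : R := b * beta_minus + 2 * a + c.

Definition lambda_k (k : nat) : R := c + 2 * a * cos (k%:R * phi).

Definition w_plus : 'cV[R]_(n.+1) :=
  \col_i (if (i == 0 :> nat) then beta_plus else 1).
Definition w_minus : 'cV[R]_(n.+1) :=
  \col_i (if (i == 0 :> nat) then beta_minus else 1).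

Definition w_k (k : nat) : 'cV[R[i]]_(n.+1) :=
  \col_i (if (i == 0 :> nat) then 0 else omega ^+ ((i.-1) * k)).

Definition cplx {m p : nat} (A : 'M[R]_(m, p)) : 'M[R[i]]_(m, p) :=
  map_mx (fun x : R => x%:C) A.

End Defs.

(* The matrix is a weighted wheel: a hub (index 0) joined with weight b to
   every vertex of an n-cycle that carries circ(c, a, 0, ..., 0, a).
   On vectors [beta, 1, ..., 1] that are constant on the rim, the rim rows give
   eigenvalue b beta + 2a + c and the hub row holds exactly when
   b beta^2 + (2a + (n+1)c) beta = n b, whose roots are beta_-/+.
   The Fourier vectors w_k (0 < k < n) sum to zero on the rim, so the hub row
   vanishes, and the circulant acts on them by c + a (omega^k + omega^-k).
   Linear independence reduces on the rim coordinates to injectivity of the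
   discrete Fourier transform (orthogonality of the characters omega^(jk)),
   and on the hub coordinate to beta_- <> beta_+, i.e. Delta > 0. *)

From mathcomp Require Import all_boot all_order all_algebra.
From mathcomp Require Import all_classical all_reals.
From mathcomp Require Import trigo.
From mathcomp.real_closed Require Import complex.
From mathcomp Require Import ring lra.
Set Implicit Arguments. Unset Strict Implicit. Unset Printing Implicit Defensive.
Import Order.TTheory GRing.Theory Num.Theory.
Local Open Scope ring_scope.
Local Open Scope complex_scope.

Lemma eqn_modD_self n m d : (0 < d < n)%N -> (m + d == m %[mod n]) = false.
Proof.
by case/andP=> d_gt0 d_ltn; rewrite eqn_mod_dvd ?leq_addr // addKn gtnNdvd.
Qed.

Lemma eqn_modS_self n m : (1 < n)%N -> (m.+1 == m %[mod n]) = false.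
Proof. by move=> n_gt1; rewrite -addn1 eqn_modD_self. Qed.

Lemma eqn_modSS n m p : (m.+1 == p.+1 %[mod n]) = (m == p %[mod n]).
Proof. by rewrite -[m.+1]addn1 -[p.+1]addn1 eqn_modDr. Qed.

Lemma dvdn_addn_sub n m t : (m < n)%N -> (t < n)%N -> (n %| m + (n - t))%N = (m == t).
Proof.
move=> m_ltn t_ltn.
rewrite /dvdn -(modnn n) -[X in (_ == X %% _)%N](subnKC (ltnW t_ltn)) eqn_modDr.
by rewrite !modn_small.
Qed.

Section CyclicOrdinals.
Variable n : nat.

Lemma eq_ordS (i j : 'I_n) : (j == ordS i) = (j == i.+1 %[mod n]).
Proof. by rewrite [in RHS]modn_small. Qed.

Lemma eq_ord_pred (i j : 'I_n) : (j == ord_pred i) = (j.+1 == i %[mod n]).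
Proof.
have n_gt0 : (0 < n)%N by apply: leq_ltn_trans (ltn_ord j).
rewrite -(eqn_modDr n.-1) addSnnS prednK // modnDr modn_small //.
by rewrite -subn1 addnBA // subn1.
Qed.

Hypothesis n_gt2 : (2 < n)%N.

Lemma ordS_neq (i : 'I_n) : ordS i != i.
Proof.
by rewrite -val_eqE /= -[X in _ == X](modn_small (ltn_ord i)) eqn_modS_self // ltnW.
Qed.

Lemma ord_pred_neq (i : 'I_n) : ord_pred i != i.
Proof. by rewrite eq_sym eq_ord_pred eqn_modS_self // ltnW. Qed.

Lemma ordS_neq_pred (i : 'I_n) : ordS i != ord_pred i.
Proof. by rewrite eq_ord_pred /= -addn1 modnDml addn1 -addn2 eqn_modD_self. Qed.

End CyclicOrdinals.

Lemma sum_mulrn_eq (S : pzSemiRingType) (I : finType) (i : I) (x : S) (F : I -> S) :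
  \sum_(j : I) x *+ (j == i) * F j = x * F i.
Proof.
under eq_bigr do rewrite mulrnAl mulrb.
by rewrite -big_mkcond big_pred1_eq.
Qed.

Section RootsOfUnity.
Variable R : realType.

Definition expi (x : R) : R[i] := cos x +i* sin x.

Lemma expi0 : expi 0 = 1.
Proof. by rewrite /expi cos0 sin0. Qed.

Lemma expiD x y : expi (x + y) = expi x * expi y.
Proof. by rewrite /expi cosD sinD; simpc; congr (_ +i* _); ring. Qed.

Lemma expiN x : expi (- x) * expi x = 1.
Proof. by rewrite -expiD addNr expi0. Qed.

Lemma cos_lt1 (x : R) : 0 < x < pi *+ 2 -> cos x < 1.
Proof.
case/andP=> x_gt0 x_lt2pi.
have -> : x = (x / 2) *+ 2 by rewrite -mulr_natr divfK ?pnatr_eq0.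
have : 0 < sin (x / 2) ^+ 2.
  by rewrite exprn_gt0 // sin_gt0_pi // divr_gt0 //= ltr_pdivrMr // mulr_natr.
by rewrite cos_mulr2n cos2sin2 -mulr_natr; lra.
Qed.

Variable n : nat.
Hypothesis n_gt0 : (0 < n)%N.

Local Notation omega := (omega R n).

Lemma omegaX m : omega ^+ m = expi (m%:R * phi R n).
Proof.
elim: m => [|m IHm]; first by rewrite mul0r expi0.
by rewrite exprSr IHm -[omega]/(expi _) -expiD -nat1r mulrDl mul1r addrC.
Qed.

Lemma omega_n : omega ^+ n = 1.
Proof.
rewrite omegaX /phi mulrC divfK ?pnatr_eq0 -?lt0n // mulr_natl.
by rewrite /expi cos2pi sin2pi.
Qed.

Lemma omegaX_mod m : omega ^+ m = omega ^+ (m %% n).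
Proof. by rewrite {1}(divn_eq m n) exprD exprM exprAC omega_n expr1n mul1r. Qed.

Lemma omegaX_modMl m k : omega ^+ (m %% n * k) = omega ^+ (m * k).
Proof. by rewrite omegaX_mod modnMml -omegaX_mod. Qed.

Lemma omegaX_neq1 r : (0 < r < n)%N -> omega ^+ r != 1.
Proof.
case/andP=> r_gt0 r_ltn; rewrite omegaX /phi.
apply/eqP => /(congr1 (@complex.Re R)) /= cos1.
suff : cos (r%:R * (2 * pi / n%:R)) < 1 :> R by rewrite cos1 ltxx.
have -> : r%:R * (2 * pi / n%:R) = pi *+ 2 * (r%:R / n%:R) :> R.
  by rewrite -mulr_natl; ring.
have two_pi_gt0 : 0 < pi *+ 2 :> R by rewrite mulrn_wgt0 ?pi_gt0.
apply: cos_lt1; rewrite pmulr_rgt0 ?divr_gt0 ?ltr0n //= gtr_pMr //.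
by rewrite ltr_pdivrMr ?ltr0n // mul1r ltr_nat.
Qed.

Lemma sum_omegaX x :
  \sum_(j < n) omega ^+ (j * x) = if (n %| x)%N then n%:R else 0.
Proof.
under eq_bigr do rewrite mulnC exprM.
have [n_dvd_x | n_ndvd_x] := ifPn.
  under eq_bigr do rewrite omegaX_mod (eqP n_dvd_x) expr1n.
  by rewrite sumr_const card_ord.
have z_neq1 : omega ^+ x != 1.
  by rewrite omegaX_mod omegaX_neq1 // ltn_mod n_gt0 andbT lt0n.
have /eqP := subrX1 (omega ^+ x) n.
rewrite exprAC omega_n expr1n subrr eq_sym mulf_eq0 subr_eq0 (negbTE z_neq1).
by move/eqP.
Qed.

Lemma expiDN x : expi x + expi (- x) = (2 * cos x)%:C.
Proof. by rewrite /expi cosN sinN; simpc; congr (_ +i* _); ring. Qed.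

Lemma omegaX_add_conj k :
  omega ^+ k + omega ^+ (n.-1 * k) = (2 * cos (k%:R * phi R n))%:C.
Proof.
have omega_inv : omega ^+ (n.-1 * k) * omega ^+ k = 1.
  by rewrite -exprD -mulSnr prednK // exprM omega_n expr1n.
rewrite -expiDN -omegaX; congr (_ + _).
by rewrite -[LHS]mulr1 -(expiN (k%:R * phi R n)) -omegaX mulrCA omega_inv mulr1.
Qed.

Lemma omega_dft_inj (G : nat -> R[i]) :
  (forall j : 'I_n, \sum_(m < n) G m * omega ^+ (j * m) = 0) ->
  forall t, (t < n)%N -> G t = 0.
Proof.
move=> G_dft t t_ltn.
have orth (m : 'I_n) : \sum_(j < n) omega ^+ (j * (n - t)) * (G m * omega ^+ (j * m))
    = n%:R *+ (m == Ordinal t_ltn) * G m.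
  under eq_bigr do rewrite mulrCA -exprD -mulnDr.
  rewrite -mulr_sumr sum_omegaX addnC dvdn_addn_sub //.
  by rewrite mulrC -mulrb.
have : \sum_(j < n) omega ^+ (j * (n - t)) * \sum_(m < n) G m * omega ^+ (j * m) = 0.
  by rewrite big1 // => j _; rewrite G_dft mulr0.
under eq_bigr do rewrite mulr_sumr.
rewrite exchange_big /=.
under eq_bigr do rewrite orth.
rewrite sum_mulrn_eq /= => /eqP.
by rewrite mulf_eq0 pnatr_eq0 (negbTE (lt0n_neq0 n_gt0)) => /eqP.
Qed.

End RootsOfUnity.

Section HubVectors.
Variables (R : realType) (n : nat).
Hypothesis n_gt0 : (0 < n)%N.

Definition hub_col (beta : R) : 'cV[R]_n.+1 := \col_i (if i == 0 :> nat then beta else 1).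

Lemma hub_w_k_free (beta1 beta2 : R) (am ap : R[i]) (g : nat -> R[i]) :
  beta1 != beta2 ->
  am *: cplx (hub_col beta1) + ap *: cplx (hub_col beta2)
    + \sum_(1 <= k < n) g k *: w_k R n k = 0 ->
  [/\ am = 0, ap = 0 & forall k, (1 <= k < n)%N -> g k = 0].
Proof.
move=> beta12 sum0.
have coord i : (am *: cplx (hub_col beta1) + ap *: cplx (hub_col beta2)
    + \sum_(1 <= k < n) g k *: w_k R n k) i 0 = 0 by rewrite sum0 mxE.
have row0 : am * beta1%:C + ap * beta2%:C = 0.
  by have := coord 0; rewrite !mxE summxE big1 ?addr0 // => k _; rewrite !mxE mulr0.
pose G m := if m == 0%N then am + ap else g m.
have G_dft (j : 'I_n) : \sum_(m < n) G m * omega R n ^+ (j * m) = 0.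
  have := coord (lift ord0 j); rewrite !mxE summxE lift0 /=.
  under eq_bigr do rewrite !mxE lift0 /=.
  rewrite rmorph1 !mulr1 => coord_j; rewrite -[RHS]coord_j.
  rewrite -(big_mkord xpredT (fun m => G m * omega R n ^+ (j * m))) big_ltn //.
  rewrite muln0 expr0 mulr1 /G eqxx; congr (_ + _).
  by apply: eq_big_nat => m /andP[m_gt0 _]; rewrite (gtn_eqF m_gt0).
have G0 := omega_dft_inj n_gt0 G_dft.
have ap_am : ap = - am.
  by apply/eqP; rewrite -addr_eq0 addrC; have := G0 0%N n_gt0; rewrite /G eqxx => ->.
have am0 : am = 0.
  have : am * (beta1 - beta2)%:C = 0 by rewrite rmorphB mulrBr -mulNr -ap_am.
  by move/eqP; rewrite mulf_eq0 fmorph_eq0 subr_eq0 (negbTE beta12) orbF => /eqP.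
split=> // [|k /andP[k_gt0 k_ltn]]; first by rewrite ap_am am0 oppr0.
by have := G0 k k_ltn; rewrite /G gtn_eqF.
Qed.

End HubVectors.

Section ArrowheadMatrix.
Variables (R : realType) (n : nat) (a b c : R).
Hypothesis n_gt2 : (2 < n)%N.

Local Notation M := (mn n a b c).

Lemma mn_lift (i j : 'I_n) : M (lift ord0 i) (lift ord0 j) =
  c *+ (j == i) + a *+ (j == ordS i) + a *+ (j == ord_pred i).
Proof.
rewrite mxE !lift0 /= eqSS !eqn_modSS (eq_sym (i.+1 %% n)%N).
rewrite -eq_ordS -eq_ord_pred.
have Si_i := negbTE (ordS_neq n_gt2 i); have Pi_i := negbTE (ord_pred_neq n_gt2 i).
have Si_Pi := negbTE (ordS_neq_pred n_gt2 i).
rewrite val_eqE (eq_sym i).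
have [->|_] := eqVneq j i; first by rewrite !(eq_sym i) Si_i Pi_i /= !mulr0n !addr0.
have [->|_] := eqVneq j (ordS i); first by rewrite Si_Pi /= !mulr0n add0r addr0.
have [_|_] := eqVneq j (ord_pred i); first by rewrite /= !mulr0n !add0r.
by rewrite /= !mulr0n !addr0.
Qed.

Lemma mn_mulmx0 (S : pzRingType) (f : {rmorphism R -> S}) (v : 'cV[S]_n.+1) :
  (map_mx f M *m v) 0 0 = - f (n%:R * c) * v 0 0 + f b * \sum_(j < n) v (lift ord0 j) 0.
Proof.
rewrite mxE big_ord_recl !mxE /= mulr_sumr rmorphN; congr (_ + _).
by apply: eq_bigr => j _; rewrite !mxE lift0.
Qed.

Lemma mn_mulmx_lift (S : pzRingType) (f : {rmorphism R -> S}) (v : 'cV[S]_n.+1)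
    (i : 'I_n) :
  (map_mx f M *m v) (lift ord0 i) 0 = f b * v 0 0 + (f c * v (lift ord0 i) 0
    + f a * (v (lift ord0 (ordS i)) 0 + v (lift ord0 (ord_pred i)) 0)).
Proof.
rewrite mxE big_ord_recl !mxE lift0 /=; congr (_ + _).
under eq_bigr do rewrite mxE mn_lift !rmorphD !rmorphMn !mulrDl.
by rewrite !big_split /= !sum_mulrn_eq mulrDr addrA.
Qed.

Lemma mn_eigen_hub beta :
  b * beta ^+ 2 + (2 * a + n.+1%:R * c) * beta = b *+ n ->
  M *m hub_col n beta = (b * beta + 2 * a + c) *: hub_col n beta.
Proof.
move=> beta_root; rewrite -[M](map_mx_id (f := idfun)) //.
apply/matrixP => i j; rewrite ord1 {j}.
case: (unliftP ord0 i) => [i'|] ->.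
  by rewrite mn_mulmx_lift !mxE !lift0 /=; ring.
rewrite mn_mulmx0 !mxE /=.
under eq_bigr do rewrite mxE lift0.
by rewrite sumr_const card_ord mulr_natr -beta_root; ring.
Qed.

Lemma mn_eigen_w_k k : (0 < k < n)%N ->
  cplx M *m w_k R n k = (lambda_k n a c k)%:C *: w_k R n k.
Proof.
case/andP=> k_gt0 k_ltn; have n_gt0 : (0 < n)%N by apply: ltn_trans k_ltn.
apply/matrixP => i j; rewrite ord1 {j}.
case: (unliftP ord0 i) => [i'|] ->; rewrite ?mn_mulmx_lift ?mn_mulmx0 !mxE ?lift0 /=.
  have -> : (lambda_k n a c k)%:C =
      c%:C + a%:C * (omega R n ^+ k + omega R n ^+ (n.-1 * k)).
    by rewrite omegaX_add_conj // !rmorphD !rmorphM; ring.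
  rewrite !omegaX_modMl // -subn1 -addnBA // subn1 mulSn mulnDl !exprD; ring.
under eq_bigr do rewrite mxE lift0.
by rewrite sum_omegaX // gtnNdvd // !mulr0 addr0.
Qed.

End ArrowheadMatrix.

Section HubEigenvalues.
Variables (R : realType) (n : nat) (a b c : R).
Hypothesis b_neq0 : b != 0.

Local Notation Delta := (Delta n a b c).

Definition hub_beta (s : R) : R := - (2 * a + n.+1%:R * c - s) / (2 * b).

Lemma hub_beta_root s : s ^+ 2 = Delta ->
  b * hub_beta s ^+ 2 + (2 * a + n.+1%:R * c) * hub_beta s = b *+ n.
Proof.
move=> s2; have -> : b * hub_beta s ^+ 2 + (2 * a + n.+1%:R * c) * hub_beta s
    = b *+ n + (s ^+ 2 - Delta) / (4 * b).
  by rewrite /hub_beta /Delta -mulr_natr; field.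
by rewrite s2 subrr mul0r addr0.
Qed.

Lemma hub_beta_inj : injective hub_beta.
Proof.
move=> s1 s2 eq_beta.
have : hub_beta s1 - hub_beta s2 = (s1 - s2) / (2 * b) by rewrite /hub_beta; field.
rewrite eq_beta subrr => /esym/eqP.
by rewrite mulf_eq0 invr_eq0 mulf_eq0 pnatr_eq0 (negbTE b_neq0) /= orbF subr_eq0 => /eqP.
Qed.

Lemma Delta_gt0 : (0 < n)%N -> 0 < Delta.
Proof.
move=> n_gt0; apply: ltr_wpDl; first exact: sqr_ge0.
apply: mulr_gt0; last by rewrite exprn_even_gt0 // b_neq0 orbT.
by rewrite mulr_gt0 ?ltr0n.
Qed.

Lemma lambda_hub_beta s : (0 < n)%N ->
  b * hub_beta s + 2 * a + c = (2 * a - n.-1%:R * c + s) / 2.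
Proof.
move=> n_gt0; rewrite /hub_beta -(prednK n_gt0) /= -!natr1.
by field.
Qed.

End HubEigenvalues.

Theorem theorem4 (R : realType) (n : nat) (hn : (2 < n)%N) (a b c : R)
    (hb : b != 0) :
  let M := mn n a b c in
  (* the two expressions for lambda_pm agree *)
  lambda_plus n a b c = (2 * a - n.-1%:R * c + Num.sqrt (Delta n a b c)) / 2 /\
  lambda_minus n a b c = (2 * a - n.-1%:R * c - Num.sqrt (Delta n a b c)) / 2 /\
  (* eigenpairs *)
  M *m w_plus n a b c = lambda_plus n a b c *: w_plus n a b c /\
  M *m w_minus n a b c = lambda_minus n a b c *: w_minus n a b c /\
  (forall k : nat, (1 <= k < n)%N ->
     cplx M *m w_k R n k = (lambda_k n a c k)%:C *: w_k R n k) /\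
  (* linear independence of w_-, w_+, w_1, ..., w_(n-1) over C *)
  (forall (am ap : R[i]) (g : nat -> R[i]),
     am *: cplx (w_minus n a b c) + ap *: cplx (w_plus n a b c)
       + \sum_(1 <= k < n) g k *: w_k R n k = 0 ->
     am = 0 /\ ap = 0 /\ forall k : nat, (1 <= k < n)%N -> g k = 0).
Proof.
move=> M; have n_gt0 : (0 < n)%N by apply: leq_trans hn.
set s := Num.sqrt (Delta n a b c).
have s_gt0 : 0 < s by rewrite sqrtr_gt0 Delta_gt0.
have s2 : s ^+ 2 = Delta n a b c by rewrite sqr_sqrtr // ltW // Delta_gt0.
have beta_minusE : beta_minus n a b c = hub_beta n a b c (- s).
  by rewrite /beta_minus /hub_beta opprK.
have lambda_minusE : lambda_minus n a b c = b * hub_beta n a b c (- s) + 2 * a + c.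
  by rewrite /lambda_minus beta_minusE.
split; first exact: lambda_hub_beta.
split; first by rewrite lambda_minusE lambda_hub_beta.
split; first exact/mn_eigen_hub/hub_beta_root.
split.
  rewrite lambda_minusE /w_minus beta_minusE.
  by apply/mn_eigen_hub/hub_beta_root; rewrite ?sqrrN.
split; first exact: mn_eigen_w_k.
have beta_neq : beta_minus n a b c != beta_plus n a b c.
  by rewrite beta_minusE (inj_eq (hub_beta_inj hb)) eqNr gt_eqF.
by move=> am ap g /(hub_w_k_free n_gt0 beta_neq)[].
Qed.
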